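(* Let $(X,d)$ be a compact metric space and $f\colon X\to X$ an equicontinuous homeomorphism. The following are equivalent: (1) $f$ has the limit shadowing property; (2) $f$ has the shadowing property; (3) $\dim X=0$, equivalently $X$ is totally disconnected.
   Context: $f$ is equicontinuous if for every $\epsilon>0$ there is $\delta>0$ such that $d(x,y)\le\delta$ implies $\sup_{n\ge0}d(f^n(x),f^n(y))\le\epsilon$. Shadowing property: for every $\epsilon>0$ there is $\delta>0$ such that every sequence $(x_i)_{i\ge0}$ with $d(f(x_i),x_{i+1})\le\delta$ for all $i$ admits $x\in X$ with $d(x_i,f^i(x))\le\epsilon$ for all $i$. Limit shadowing property: every sequence $(x_i)_{i\ge0}$ with $\lim_i d(f(x_i),x_{i+1})=0$ admits $y\in X$ with $\lim_i d(x_i,f^i(y))=0$. *)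

From Stdlib Require Export Reals List.
Open Scope R_scope.

Section MetricDefs.
Variable M : Metric_Space.
Local Notation X := (Base M).
Local Notation d := (dist M).

Definition is_open (U : X -> Prop) : Prop :=
  forall x, U x -> exists r, r > 0 /\ forall y, d x y < r -> U y.

Definition compact_space : Prop :=
  forall (I : Type) (U : I -> X -> Prop),
    (forall i, is_open (U i)) -> (forall x, exists i, U i x) ->
    exists l : list I, forall x, exists i, In i l /\ U i x.

Definition continuous_map (f : X -> X) : Prop :=
  forall x eps, eps > 0 -> exists delta, delta > 0 /\
    forall y, d x y < delta -> d (f x) (f y) < eps.

Definition homeomorphism (f : X -> X) : Prop :=
  continuous_map f /\
  exists g : X -> X, continuous_map g /\
    (forall x, g (f x) = x) /\ (forall x, f (g x) = x).

Fixpoint iter (n : nat) (f : X -> X) (x : X) : X :=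
  match n with O => x | S k => f (iter k f x) end.

Definition equicontinuous (f : X -> X) : Prop :=
  forall eps, eps > 0 -> exists delta, delta > 0 /\
    forall x y, d x y <= delta -> forall n, d (iter n f x) (iter n f y) <= eps.

Definition shadowing (f : X -> X) : Prop :=
  forall eps, eps > 0 -> exists delta, delta > 0 /\
    forall xs : nat -> X, (forall i, d (f (xs i)) (xs (S i)) <= delta) ->
      exists x, forall i, d (xs i) (iter i f x) <= eps.

Definition limit_shadowing (f : X -> X) : Prop :=
  forall xs : nat -> X, Un_cv (fun i => d (f (xs i)) (xs (S i))) 0 ->
    exists y, Un_cv (fun i => d (xs i) (iter i f y)) 0.

Definition connected_subset (S : X -> Prop) : Prop :=
  forall U V, is_open U -> is_open V ->
    (forall x, S x -> U x \/ V x) ->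
    (forall x, S x -> U x -> V x -> False) ->
    (forall x, S x -> U x) \/ (forall x, S x -> V x).

Definition totally_disconnected : Prop :=
  forall S, connected_subset S -> forall x y, S x -> S y -> x = y.

(* Lebesgue covering dimension 0: every finite open cover has a finite open
   refinement consisting of pairwise disjoint sets (order <= 1). *)
Definition covers (C : list (X -> Prop)) : Prop :=
  forall x, exists U, In U C /\ U x.

Definition dim_zero : Prop :=
  forall C : list (X -> Prop), Forall is_open C -> covers C ->
    exists V : list (X -> Prop),
      Forall is_open V /\ covers V /\
      (forall W, In W V -> exists U, In U C /\ forall x, W x -> U x) /\
      (forall i j, (i < length V)%nat -> (j < length V)%nat -> i <> j ->
         forall x, nth i V (fun _ => False) x -> nth j V (fun _ => False) x -> False).

End MetricDefs.

(* The pivot is [chain_small]: [e]-chains have uniformly small diameter as [e -> 0]. In a compact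
   space this is equivalent to dimension zero (the [e]-chain classes form a finite clopen
   partition) and to total disconnectedness (otherwise two distinct points are chained at every
   scale, and the points so chained to one of them form a connected set). An equicontinuous
   homeomorphism of a compact space is uniformly recurrent on pairs of points, so two points whose
   orbits are eventually [gm]-close are themselves [gm]-close. Hence a shadowed chain is small, and
   shadowing implies [chain_small]. Conversely, in dimension zero the true orbit of the initial
   point and the pseudo-orbit stay in a common piece of a fine clopen partition. Shadowing gives
   limit shadowing through a cluster point of points shadowing ever later tails, and limit
   shadowing forbids two distinct points chained at every scale: concatenating ever finer chain
   loops through both gives a limit pseudo-orbit visiting each of them infinitely often. *)

From Stdlib Require Import Reals List Lra Lia Classical ClassicalEpsilon Arith.
Open Scope R_scope.

Lemma inv_succ_pos (n : nat) : / INR (S n) > 0.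
Proof. apply Rinv_0_lt_compat, lt_0_INR; lia. Qed.

Lemma inv_succ_antimono (m n : nat) : (m <= n)%nat -> / INR (S n) <= / INR (S m).
Proof. intros Hmn; apply Rinv_le_contravar; [apply lt_0_INR; lia | apply le_INR; lia]. Qed.

Lemma inv_succ_lt (e : R) : e > 0 -> exists n : nat, / INR (S n) < e.
Proof.
  intros He; destruct (archimed_cor1 e He) as [[|n] [Hn Hpos]]; [lia | now exists n].
Qed.

Lemma Rmin_list_pos {A : Type} (r : A -> R) (l : list A) :
  (forall a, r a > 0) -> exists m, m > 0 /\ forall a, In a l -> m <= r a.
Proof.
  intros Hr; induction l as [|a l [m [Hm Hl]]].
  - exists 1; split; [lra | intros _ []].
  - exists (Rmin (r a) m); split; [now apply Rmin_glb_lt; [apply Hr|] |].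
    intros b [<-|Hb]; [apply Rmin_l |].
    apply Rle_trans with m; [apply Rmin_r | auto].
Qed.

Lemma nat_list_bound {A : Type} (N : A -> nat) (l : list A) :
  exists K, forall a, In a l -> (N a <= K)%nat.
Proof.
  exists (list_max (map N l)); intros a Ha.
  assert (HK := proj1 (list_max_le (map N l) _) (le_n _)).
  rewrite Forall_forall in HK; apply HK, in_map, Ha.
Qed.

Lemma exists_least (P : nat -> Prop) :
  (exists n, P n) -> exists n, P n /\ forall m, (m < n)%nat -> ~ P m.
Proof.
  intros HP; destruct (dec_inh_nat_subset_has_unique_least_element P (fun n => classic (P n)) HP)
    as [n [[Pn Hleast] _]].
  exists n; split; auto; intros m Hm Pm; specialize (Hleast m Pm); lia.
Qed.

Section Metric.
Variable M : Metric_Space.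
Local Notation X := (Base M).
Local Notation d := (dist M).

Lemma dist_nonneg (x y : X) : 0 <= d x y.
Proof. generalize (dist_pos M x y); lra. Qed.

Lemma dist_self (x : X) : d x x = 0.
Proof. now apply (dist_refl M). Qed.

Lemma R_dist_dist_0 (x y : X) : R_dist (d x y) 0 = d x y.
Proof. unfold R_dist; rewrite Rminus_0_r; apply Rabs_pos_eq, dist_nonneg. Qed.

Lemma dist_neq_pos (x y : X) : x <> y -> d x y > 0.
Proof.
  intros Hxy; destruct (Rle_lt_or_eq_dec _ _ (dist_nonneg x y)) as [H|H]; [lra|].
  now contradict Hxy; apply (dist_refl M).
Qed.

Lemma dist_triangle (x y z : X) : d x z <= d x y + d y z.
Proof. apply (dist_tri M). Qed.

Lemma is_open_ball (c : X) (r : R) : is_open M (fun z => d c z < r).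
Proof.
  intros z Hz; exists (r - d c z); split; [lra|].
  intros y Hy; generalize (dist_triangle c z y); lra.
Qed.

Lemma is_open_outside_ball (c : X) (r : R) : is_open M (fun z => r < d c z).
Proof.
  intros z Hz; exists (d c z - r); split; [lra|].
  intros y Hy; generalize (dist_triangle c y z); rewrite (dist_sym M y z); lra.
Qed.

Lemma is_open_and (U V : X -> Prop) :
  is_open M U -> is_open M V -> is_open M (fun x => U x /\ V x).
Proof.
  intros HU HV x [Ux Vx].
  destruct (HU x Ux) as [r [Hr HrU]], (HV x Vx) as [s [Hs HsV]].
  exists (Rmin r s); split; [now apply Rmin_glb_lt|].
  intros y Hy; split; [apply HrU | apply HsV];
    eapply Rlt_le_trans; eauto; [apply Rmin_l | apply Rmin_r].
Qed.

Lemma is_open_forall_lt (U : nat -> X -> Prop) (n : nat) :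
  (forall i, (i < n)%nat -> is_open M (U i)) ->
  is_open M (fun x => forall i, (i < n)%nat -> U i x).
Proof.
  induction n as [|n IH]; intros HU.
  - intros x _; exists 1; split; [lra | intros y _ i Hi; lia].
  - assert (Hopen := is_open_and _ _ (IH (fun i Hi => HU i (Nat.lt_lt_succ_r _ _ Hi)))
                        (HU n (Nat.lt_succ_diag_r n))).
    intros x Hx; destruct (Hopen x) as [r [Hr Hball]]; [split; auto|].
    exists r; split; auto; intros y Hy i Hi.
    destruct (Hball y Hy) as [Hlt Hn].
    destruct (Nat.lt_ge_cases i n); [auto | now replace i with n by lia].
Qed.

(* Complete normality of metric spaces: keep the balls of half radius around the points of [S]. *)
Lemma open_separation (S U V : X -> Prop) :
  is_open M U -> is_open M V -> (forall x, S x -> U x -> V x -> False) ->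
  exists U' V', is_open M U' /\ is_open M V' /\ (forall x, U' x -> V' x -> False) /\
    (forall x, S x -> U x -> U' x) /\ (forall x, S x -> V x -> V' x).
Proof.
  intros HU HV Hdisj.
  set (shrink W x := exists u r, S u /\ r > 0 /\ (forall y, d u y < r -> W y) /\ d u x < r / 2).
  assert (Hopen : forall W, is_open M (shrink W)).
  { intros W x (u & r & Su & Hr & Hball & Hux); exists (r / 2 - d u x); split; [lra|].
    intros y Hy; exists u, r; repeat split; auto; generalize (dist_triangle u x y); lra. }
  assert (Hcontains : forall W, is_open M W -> forall x, S x -> W x -> shrink W x).
  { intros W HW x Sx Wx; destruct (HW x Wx) as [r [Hr Hball]].
    exists x, r; repeat split; auto; rewrite dist_self; lra. }
  exists (shrink U), (shrink V); repeat split; auto.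
  intros x (u & r & Su & Hr & HUu & Hux) (v & s & Sv & Hs & HVv & Hvx).
  assert (Huv := dist_triangle u x v); rewrite (dist_sym M x v) in Huv.
  destruct (Rle_lt_dec s r).
  - apply (Hdisj v Sv); [apply HUu; lra | apply HVv; rewrite dist_self; lra].
  - apply (Hdisj u Su); [apply HUu; rewrite dist_self; lra | apply HVv; rewrite dist_sym; lra].
Qed.

End Metric.

Section Compactness.
Variable M : Metric_Space.
Local Notation X := (Base M).
Local Notation d := (dist M).
Hypothesis HC : compact_space M.

Lemma compact_ball_cover (r : X -> R) :
  (forall x, r x > 0) -> exists l, forall x, exists c, In c l /\ d c x < r c.
Proof.
  intros Hr; destruct (HC X (fun c z => d c z < r c)) as [l Hl].
  - intros c; apply is_open_ball.
  - intros x; exists x; rewrite dist_self; apply Hr.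
  - now exists l.
Qed.

Lemma compact_cluster_point (xs : nat -> X) (P : nat -> Prop) :
  (forall N, exists n, (N <= n)%nat /\ P n) ->
  exists y, forall e, e > 0 -> forall N, exists n, (N <= n)%nat /\ P n /\ d (xs n) y < e.
Proof.
  intros HP; apply NNPP; intros Hno.
  assert (Hfar : forall y, exists eN : R * nat, fst eN > 0 /\
            forall n, (snd eN <= n)%nat -> P n -> fst eN <= d (xs n) y).
  { intros y; apply NNPP; intros Hy; apply Hno; exists y; intros e He N.
    apply NNPP; intros Hn; apply Hy; exists (e, N); split; auto.
    intros n HNn Pn; apply Rnot_lt_le; intros Hlt; apply Hn; eauto. }
  destruct (choice _ Hfar) as [eN HeN].
  destruct (compact_ball_cover (fun y => fst (eN y))) as [l Hl]; [apply HeN|].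
  destruct (nat_list_bound (fun y => snd (eN y)) l) as [K HK].
  destruct (HP K) as [n [HKn Pn]], (Hl (xs n)) as [c [Hc Hxc]].
  assert (Hfar_c := proj2 (HeN c) n ltac:(specialize (HK c Hc); lia) Pn).
  rewrite dist_sym in Hxc; lra.
Qed.

Lemma compact_cluster_pair (xs ys : nat -> X) :
  exists x y, forall e, e > 0 -> forall N, exists n, (N <= n)%nat /\ d (xs n) x < e /\ d (ys n) y < e.
Proof.
  destruct (compact_cluster_point xs (fun _ => True)) as [x Hx]; [eauto|].
  assert (Hk : forall k, exists y, forall e, e > 0 -> forall N,
             exists n, (N <= n)%nat /\ d (xs n) x < / INR (S k) /\ d (ys n) y < e).
  { intros k; apply compact_cluster_point; intros N.
    destruct (Hx _ (inv_succ_pos k) N) as [n [HNn [_ Hn]]]; eauto. }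
  destruct (choice _ Hk) as [yk Hyk].
  destruct (compact_cluster_point yk (fun _ => True)) as [y Hy]; [eauto|].
  exists x, y; intros e He N.
  destruct (inv_succ_lt e He) as [K HK].
  destruct (Hy (e / 2) ltac:(lra) K) as [k [HKk [_ Hk1]]].
  destruct (Hyk k (e / 2) ltac:(lra) N) as [n [HNn [Hn1 Hn2]]].
  exists n; split; [auto | split].
  - generalize (inv_succ_antimono K k HKk); lra.
  - generalize (dist_triangle M (ys n) (yk k) y); lra.
Qed.

Lemma lebesgue_number (C : list (X -> Prop)) :
  Forall (is_open M) C -> covers M C ->
  exists g, g > 0 /\ forall x, exists U, In U C /\ forall y, d x y <= g -> U y.
Proof.
  intros Hopen Hcov; rewrite Forall_forall in Hopen.
  assert (Hball : forall x, exists r, r > 0 /\ exists U, In U C /\ forall y, d x y < r -> U y).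
  { intros x; destruct (Hcov x) as [U [HU Ux]].
    destruct (Hopen U HU x Ux) as [r [Hr Hr_U]]; eauto. }
  destruct (choice _ Hball) as [r Hr].
  destruct (compact_ball_cover (fun x => r x / 2)) as [l Hl].
  { intros x; destruct (Hr x); lra. }
  destruct (Rmin_list_pos (fun x => r x / 2) l) as [g [Hg Hgl]].
  { intros x; destruct (Hr x); lra. }
  exists g; split; auto; intros x.
  destruct (Hl x) as [c [Hc Hcx]], (proj2 (Hr c)) as [U [HU HcU]].
  exists U; split; auto; intros y Hy; apply HcU.
  generalize (dist_triangle M c x y) (Hgl c Hc); lra.
Qed.

End Compactness.

Section Chains.
Variable M : Metric_Space.
Local Notation X := (Base M).
Local Notation d := (dist M).
Variable e : R.

Definition chain_steps (k : nat) (z : nat -> X) : Prop :=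
  forall i, (i < k)%nat -> d (z i) (z (S i)) < e.

Definition chained (x y : X) : Prop :=
  exists k z, z 0%nat = x /\ z k = y /\ chain_steps k z.

Lemma chain_steps_app k1 z1 k2 z2 :
  chain_steps k1 z1 -> chain_steps k2 z2 -> z1 k1 = z2 0%nat ->
  exists z, chain_steps (k1 + k2) z /\ z 0%nat = z1 0%nat /\ z k1 = z1 k1 /\ z (k1 + k2)%nat = z2 k2.
Proof.
  intros H1 H2 H12; exists (fun i => if (i <=? k1)%nat then z1 i else z2 (i - k1)%nat).
  repeat split.
  - intros i Hi; destruct (Nat.leb_spec (S i) k1), (Nat.leb_spec i k1); try lia.
    + apply H1; lia.
    + replace i with k1 by lia; rewrite H12, Nat.sub_succ_l, Nat.sub_diag by lia; apply H2; lia.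
    + rewrite Nat.sub_succ_l by lia; apply H2; lia.
  - now rewrite Nat.leb_refl.
  - destruct (Nat.leb_spec (k1 + k2) k1).
    + now replace k2 with 0%nat in * by lia; rewrite Nat.add_0_r.
    + f_equal; lia.
Qed.

Lemma chained_refl x : chained x x.
Proof. exists 0%nat, (fun _ => x); repeat split; intros i Hi; lia. Qed.

Lemma chained_step x y : d x y < e -> chained x y.
Proof.
  intros Hxy; exists 1%nat, (fun i => match i with O => x | _ => y end).
  repeat split; intros i Hi; now replace i with 0%nat by lia.
Qed.

Lemma chained_trans x y z : chained x y -> chained y z -> chained x z.
Proof.
  intros (k1 & z1 & <- & Hy1 & H1) (k2 & z2 & Hy2 & <- & H2).
  destruct (chain_steps_app k1 z1 k2 z2 H1 H2 ltac:(congruence)) as (c & Hc & ? & _ & ?).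
  now exists (k1 + k2)%nat, c.
Qed.

Lemma chained_snoc x y z : chained x y -> d y z < e -> chained x z.
Proof. intros Hxy Hyz; exact (chained_trans _ _ _ Hxy (chained_step _ _ Hyz)). Qed.

Lemma chained_sym x y : chained x y -> chained y x.
Proof.
  intros (k & z & <- & <- & Hz); exists k, (fun i => z (k - i)%nat).
  rewrite Nat.sub_0_r, Nat.sub_diag; repeat split.
  intros i Hi; rewrite dist_sym; replace (k - i)%nat with (S (k - S i)) by lia; apply Hz; lia.
Qed.

Lemma chained_loop a b : chained a b -> a <> b ->
  exists L c m, c 0%nat = a /\ c L = a /\ c m = b /\ (m < L)%nat /\ chain_steps L c.
Proof.
  intros Hab Hneq; pose proof (chained_sym _ _ Hab) as Hba.
  destruct Hab as (k1 & z1 & Ha1 & Hb1 & H1), Hba as (k2 & z2 & Hb2 & Ha2 & H2).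
  destruct (chain_steps_app k1 z1 k2 z2 H1 H2 ltac:(congruence)) as (c & Hc & H0 & Hk1 & Hend).
  exists (k1 + k2)%nat, c, k1; repeat split; try congruence; auto.
  destruct k2; [contradict Hneq; congruence | lia].
Qed.

Lemma chained_exit (U : X -> Prop) x y : chained x y -> U x -> ~ U y ->
  exists u v, U u /\ ~ U v /\ d u v < e /\ chained x v.
Proof.
  intros (k & z & <- & <- & Hz); induction k as [|k IH]; intros Ux Uy; [contradiction|].
  assert (Hprefix : chain_steps k z) by (intros i Hi; apply Hz; lia).
  destruct (classic (U (z k))) as [Uk|Uk].
  - exists (z k), (z (S k)); split; [|split; [|split]]; auto.
    now exists (S k), z.
  - destruct (IH Hprefix Ux Uk) as (u & v & Uu & Uv & Huv & Hv); eauto.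
Qed.

Lemma is_open_chained x : e > 0 -> is_open M (chained x).
Proof. intros He y Hy; exists e; split; [auto | intros z Hz; exact (chained_snoc _ _ _ Hy Hz)]. Qed.

Lemma is_open_not_chained x : e > 0 -> is_open M (fun y => ~ chained x y).
Proof.
  intros He y Hy; exists e; split; [auto|]; intros z Hz Hxz.
  apply Hy, (chained_snoc _ _ _ Hxz); now rewrite dist_sym.
Qed.

End Chains.

Lemma chained_mono M (e1 e2 : R) x y : e1 <= e2 -> chained M e1 x y -> chained M e2 x y.
Proof.
  intros He (k & z & Hx & Hy & Hz); exists k, z; repeat split; auto.
  intros i Hi; specialize (Hz i Hi); lra.
Qed.

Section Concatenation.
Local Open Scope nat_scope.
Variables (T : Type) (step : nat -> T -> T -> Prop) (L : nat -> nat) (c : nat -> nat -> T).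
Hypothesis L_pos : forall k, 0 < L k.
Hypothesis c_join : forall k, c (S k) 0 = c k (L k).
Hypothesis c_step : forall k i, i < L k -> step k (c k i) (c k (S i)).

(* [position t = (k, j)]: time [t] of the concatenation is step [j] of path [c k]. *)
Fixpoint position (t : nat) : nat * nat :=
  match t with
  | O => (0, 0)
  | S t' => let (k, j) := position t' in if S j <? L k then (k, S j) else (S k, 0)
  end.

Lemma position_offset_lt t : snd (position t) < L (fst (position t)).
Proof.
  induction t as [|t IH]; simpl; [apply L_pos|].
  destruct (position t) as [k j]; destruct (Nat.ltb_spec (S j) (L k)); simpl; auto.
Qed.

Lemma position_block_mono t t' : t <= t' -> fst (position t) <= fst (position t').
Proof.
  induction 1 as [|t' _ IH]; auto; simpl.
  destruct (position t') as [k j]; destruct (Nat.ltb_spec (S j) (L k)); simpl in *; lia.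
Qed.

Lemma position_run t k : position t = (k, 0) -> forall j, j < L k -> position (t + j) = (k, j).
Proof.
  intros Ht j; induction j as [|j IH]; intros Hj; [now rewrite Nat.add_0_r|].
  rewrite Nat.add_succ_r; simpl; rewrite IH by lia.
  now destruct (Nat.ltb_spec (S j) (L k)); [|lia].
Qed.

Lemma position_block_start k : exists t, position t = (k, 0).
Proof.
  induction k as [|k [t Ht]]; [now exists 0|].
  exists (S (t + (L k - 1))); simpl; rewrite (position_run t k Ht) by (specialize (L_pos k); lia).
  now destruct (Nat.ltb_spec (S (L k - 1)) (L k)); [specialize (L_pos k); lia|].
Qed.

Lemma concat_paths : exists (p : nat -> T) (level : nat -> nat),
  (forall t, step (level t) (p t) (p (S t))) /\
  (forall K, exists t0, forall t, t0 <= t -> K <= level t) /\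
  (forall N, exists k t0, N <= t0 /\ forall j, j < L k -> p (t0 + j) = c k j).
Proof.
  exists (fun t => c (fst (position t)) (snd (position t))), (fun t => fst (position t)).
  split; [|split].
  - intros t; pose proof (position_offset_lt t) as Hlt; simpl.
    destruct (position t) as [k j]; simpl in *.
    destruct (Nat.ltb_spec (S j) (L k)); simpl; [now apply c_step|].
    rewrite c_join; replace (L k) with (S j) by lia; now apply c_step.
  - intros K; destruct (position_block_start K) as [t0 Ht0]; exists t0; intros t Ht.
    now generalize (position_block_mono _ _ Ht); rewrite Ht0.
  - intros N; set (k := S (fst (position N))); destruct (position_block_start k) as [t0 Ht0].
    exists k, t0; split.
    + destruct (Nat.le_gt_cases N t0) as [|Hlt]; auto.
      generalize (position_block_mono t0 N ltac:(lia)); rewrite Ht0; simpl; lia.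
    + intros j Hj; now rewrite (position_run t0 k Ht0 j Hj).
Qed.

End Concatenation.

Section Topology.
Variable M : Metric_Space.
Local Notation X := (Base M).
Local Notation d := (dist M).
Local Notation nth_set i V := (nth i V (fun _ : X => False)).

Definition pairwise_disjoint (V : list (X -> Prop)) : Prop :=
  forall i j, (i < length V)%nat -> (j < length V)%nat -> i <> j ->
    forall x, nth_set i V x -> nth_set j V x -> False.

Definition refines (V C : list (X -> Prop)) : Prop :=
  forall W, In W V -> exists U, In U C /\ forall x, W x -> U x.

Lemma same_piece_trans (V : list (X -> Prop)) x y z : pairwise_disjoint V ->
  (exists W, In W V /\ W x /\ W y) -> (exists W, In W V /\ W y /\ W z) ->
  exists W, In W V /\ W x /\ W z.
Proof.
  intros Hdisj [W1 (HW1 & Hx & Hy1)] [W2 (HW2 & Hy2 & Hz)].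
  destruct (In_nth V W1 (fun _ => False) HW1) as [i [Hi <-]].
  destruct (In_nth V W2 (fun _ => False) HW2) as [j [Hj <-]].
  destruct (Nat.eq_dec i j) as [<-|Hij]; [eauto | destruct (Hdisj i j Hi Hj Hij y Hy1 Hy2)].
Qed.

Lemma clopen_cover_disjoint_refinement (C : list (X -> Prop)) :
  Forall (is_open M) C -> Forall (fun U => is_open M (fun x => ~ U x)) C -> covers M C ->
  exists V, Forall (is_open M) V /\ covers M V /\ refines V C /\ pairwise_disjoint V.
Proof.
  intros Hopen Hclosed Hcov; rewrite Forall_forall in Hopen, Hclosed.
  set (W i x := nth_set i C x /\ forall j, (j < i)%nat -> ~ nth_set j C x).
  set (V := map W (seq 0 (length C))).
  assert (HV : forall i, (i < length V)%nat -> nth_set i V = W i).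
  { intros i Hi; unfold V in *; rewrite length_map, length_seq in Hi.
    rewrite nth_indep with (d' := W 0%nat) by (now rewrite length_map, length_seq).
    now rewrite map_nth, seq_nth. }
  assert (HinV : forall U, In U V -> exists i, (i < length C)%nat /\ U = W i).
  { intros U HU; apply in_map_iff in HU; destruct HU as [i [<- Hi]].
    apply in_seq in Hi; exists i; split; [lia | auto]. }
  exists V; split; [|split; [|split]].
  - apply Forall_forall; intros U HU; destruct (HinV U HU) as [i [Hi ->]].
    apply is_open_and; [now apply Hopen, nth_In|].
    apply is_open_forall_lt; intros j Hj; apply Hclosed, nth_In; lia.
  - intros x; destruct (Hcov x) as [U [HU Ux]], (In_nth C U (fun _ => False) HU) as [i [Hi <-]].
    destruct (exists_least (fun i => (i < length C)%nat /\ nth_set i C x)) as [i0 [[Hi0 Hx] Hleast]].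
    { now exists i. }
    exists (W i0); split.
    + apply in_map_iff; exists i0; split; auto; apply in_seq; lia.
    + split; auto; intros j Hj Hxj; apply (Hleast j Hj); split; [lia | auto].
  - intros U HU; destruct (HinV U HU) as [i [Hi ->]].
    exists (nth_set i C); split; [now apply nth_In | now intros x []].
  - intros i j Hi Hj Hij x; rewrite (HV i Hi), (HV j Hj); intros [Hxi Hi'] [Hxj Hj'].
    destruct (proj1 (Nat.lt_gt_cases i j) Hij) as [Hlt|Hgt]; [exact (Hj' i Hlt Hxi) | exact (Hi' j Hgt Hxj)].
Qed.

Lemma connected_subset_in_piece (V : list (X -> Prop)) (S : X -> Prop) i x :
  Forall (is_open M) V -> covers M V -> pairwise_disjoint V -> connected_subset M S ->
  (i < length V)%nat -> S x -> nth_set i V x -> forall y, S y -> nth_set i V y.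
Proof.
  intros Hopen Hcov Hdisj Hconn Hi Sx Hx.
  rewrite Forall_forall in Hopen.
  set (B z := exists j, (j < length V)%nat /\ j <> i /\ nth_set j V z).
  destruct (Hconn (nth_set i V) B) as [HA|HB]; auto.
  - now apply Hopen, nth_In.
  - intros z (j & Hj & Hji & Hz); destruct (Hopen _ (nth_In V (fun _ => False) Hj) z Hz) as [r [Hr Hball]].
    exists r; split; auto; intros w Hw; exists j; auto.
  - intros z _; destruct (Hcov z) as [U [HU Hz]], (In_nth V U (fun _ => False) HU) as [j [Hj <-]].
    destruct (Nat.eq_dec j i) as [->|Hji]; [now left | right; now exists j].
  - intros z _ Hz (j & Hj & Hji & Hz'); exact (Hdisj i j Hi Hj (not_eq_sym Hji) z Hz Hz').
  - destruct (HB x Sx) as (j & Hj & Hji & Hx'); exfalso; exact (Hdisj i j Hi Hj (not_eq_sym Hji) x Hx Hx').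
Qed.

Lemma dim_zero_totally_disconnected : dim_zero M -> totally_disconnected M.
Proof.
  intros Hdim S Hconn x y Sx Sy; apply NNPP; intros Hxy.
  pose proof (dist_neq_pos M x y Hxy) as Hr; set (r := d x y) in *.
  set (near z := d x z < 2 * r / 3); set (far z := r / 3 < d x z).
  destruct (Hdim (near :: far :: nil)) as (V & Hopen & Hcov & Hrefine & Hdisj).
  - repeat constructor; [apply is_open_ball | apply is_open_outside_ball].
  - intros z; destruct (Rlt_or_le (d x z) (2 * r / 3)).
    + exists near; split; [now left | auto].
    + exists far; split; [right; now left | unfold far; lra].
  - destruct (Hcov x) as [W [HW Wx]], (In_nth V W (fun _ => False) HW) as [i [Hi HWi]].
    assert (Wy := connected_subset_in_piece V S i x Hopen Hcov Hdisj Hconn Hi Sx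
                    ltac:(now rewrite HWi) y Sy); rewrite HWi in Wy.
    destruct (Hrefine W HW) as [U [[<-|[<-|[]]] HWU]].
    + specialize (HWU y Wy); unfold near, r in *; lra.
    + specialize (HWU x Wx); unfold far in HWU; rewrite dist_self in HWU; lra.
Qed.

Hypothesis HC : compact_space M.

Definition chain_small : Prop :=
  forall gm, gm > 0 -> exists e, e > 0 /\ forall a b, chained M e a b -> d a b <= gm.

Lemma chain_small_dim_zero : chain_small -> dim_zero M.
Proof.
  intros Hsmall C Hopen Hcov.
  destruct (lebesgue_number M HC C Hopen Hcov) as [gm [Hgm Hleb]].
  destruct (Hsmall gm Hgm) as [e [He Hchain]].
  destruct (HC X (chained M e)) as [P HP].
  - intros p; now apply is_open_chained.
  - intros x; exists x; apply chained_refl.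
  - destruct (clopen_cover_disjoint_refinement (map (chained M e) P)) as (V & HVopen & HVcov & HVref & HVdisj).
    + apply Forall_forall; intros U HU; apply in_map_iff in HU; destruct HU as [p [<- _]].
      now apply is_open_chained.
    + apply Forall_forall; intros U HU; apply in_map_iff in HU; destruct HU as [p [<- _]].
      now apply is_open_not_chained.
    + intros x; destruct (HP x) as [p [Hp Hpx]]; exists (chained M e p); split; auto.
      now apply in_map.
    + exists V; split; [|split; [|split]]; auto.
      intros W HW; destruct (HVref W HW) as [U' [HU' HWU']].
      apply in_map_iff in HU'; destruct HU' as [p [<- _]].
      destruct (Hleb p) as [U [HU HpU]]; exists U; split; [auto | intros x Wx; apply HpU, Hchain, HWU', Wx].
Qed.

Lemma not_chain_small_pair : ~ chain_small -> exists a b, a <> b /\ forall e, e > 0 -> chained M e a b.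
Proof.
  intros Hnot; apply not_all_ex_not in Hnot; destruct Hnot as [gm Hgm].
  apply imply_to_and in Hgm; destruct Hgm as [Hgm Hbig].
  assert (Hpairs : forall n : nat, exists ab : X * X,
             chained M (/ INR (S n)) (fst ab) (snd ab) /\ gm < d (fst ab) (snd ab)).
  { intros n; apply NNPP; intros Hn; apply Hbig; exists (/ INR (S n)); split; [apply inv_succ_pos|].
    intros a b Hab; apply Rnot_lt_le; intros Hlt; apply Hn; now exists (a, b). }
  destruct (choice _ Hpairs) as [ab Hab].
  destruct (compact_cluster_pair M HC (fun n => fst (ab n)) (fun n => snd (ab n))) as [a [b Hlim]].
  exists a, b; split.
  - intros <-; destruct (Hlim (gm / 3) ltac:(lra) 0%nat) as [n [_ [Ha Hb]]].
    generalize (proj2 (Hab n)) (dist_triangle M (fst (ab n)) a (snd (ab n))).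
    rewrite (dist_sym M a); lra.
  - intros e He; destruct (inv_succ_lt e He) as [K HK].
    destruct (Hlim e He K) as [n [HKn [Ha Hb]]].
    apply (chained_trans _ _ _ (fst (ab n))); [apply chained_step; now rewrite dist_sym|].
    apply (chained_snoc _ _ _ (snd (ab n))); auto.
    apply (chained_mono M (/ INR (S n))); [generalize (inv_succ_antimono K n HKn); lra | apply Hab].
Qed.

(* In a compact space this is the connected component of [a]. *)
Definition chain_component (a : X) (z : X) : Prop := forall e, e > 0 -> chained M e a z.

Lemma chain_component_connected (a : X) : connected_subset M (chain_component a).
Proof.
  intros U V HU HV Hcov Hdisj; apply NNPP; intros Hnone.
  apply not_or_and in Hnone; destruct Hnone as [HnotU HnotV].
  apply not_all_ex_not in HnotU; destruct HnotU as [p Hp]; apply imply_to_and in Hp.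
  apply not_all_ex_not in HnotV; destruct HnotV as [q Hq]; apply imply_to_and in Hq.
  destruct Hp as [Sp Up], Hq as [Sq Vq].
  destruct (open_separation M _ U V HU HV Hdisj) as (U' & V' & HU' & HV' & Hdisj' & HUU' & HVV').
  assert (Hcross : forall n : nat, exists uv : X * X, U' (fst uv) /\ ~ U' (snd uv) /\
             d (fst uv) (snd uv) < / INR (S n) /\ chained M (/ INR (S n)) a (snd uv)).
  { intros n; pose proof (inv_succ_pos n) as Hn.
    destruct (chained_exit M (/ INR (S n)) U' q p) as (u & v & Hu & Hv & Huv & Hqv).
    - exact (chained_trans M _ _ _ _ (chained_sym M _ _ _ (Sq _ Hn)) (Sp _ Hn)).
    - apply HUU'; auto; destruct (Hcov q Sq); tauto.
    - intros Hp; apply (Hdisj' p Hp), HVV'; auto; destruct (Hcov p Sp); tauto.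
    - exists (u, v); repeat split; auto; exact (chained_trans M _ _ _ _ (Sq _ Hn) Hqv). }
  destruct (choice _ Hcross) as [uv Huv].
  destruct (compact_cluster_point M HC (fun n => snd (uv n)) (fun _ => True)) as [w Hw]; [eauto|].
  assert (Sw : chain_component a w).
  { intros e He; destruct (inv_succ_lt (e / 2) ltac:(lra)) as [K HK].
    destruct (Hw (e / 2) ltac:(lra) K) as [n [HKn [_ Hn]]].
    apply (chained_snoc _ _ _ (snd (uv n))); [|lra].
    apply (chained_mono M (/ INR (S n))); [generalize (inv_succ_antimono K n HKn); lra | apply Huv]. }
  destruct (Hcov w Sw) as [Uw|Vw].
  - destruct (HU' w (HUU' w Sw Uw)) as [r [Hr Hball]], (Hw r Hr 0%nat) as [n [_ [_ Hn]]].
    apply (proj1 (proj2 (Huv n))), Hball; now rewrite dist_sym.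
  - destruct (HV' w (HVV' w Sw Vw)) as [r [Hr Hball]].
    destruct (inv_succ_lt (r / 2) ltac:(lra)) as [K HK], (Hw (r / 2) ltac:(lra) K) as [n [HKn [_ Hn]]].
    destruct (Huv n) as (Hu & _ & Hd & _).
    apply (Hdisj' _ Hu), Hball.
    generalize (dist_triangle M w (snd (uv n)) (fst (uv n))) (inv_succ_antimono K n HKn).
    rewrite (dist_sym M w (snd (uv n))), (dist_sym M (snd (uv n)) (fst (uv n))); lra.
Qed.

Lemma totally_disconnected_chain_small : totally_disconnected M -> chain_small.
Proof.
  intros Htd; apply NNPP; intros Hnot.
  destruct (not_chain_small_pair Hnot) as (a & b & Hab & Hchain).
  apply Hab, (Htd (chain_component a) (chain_component_connected a)); auto.
  intros e _; apply chained_refl.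
Qed.

End Topology.

Lemma iter_succ_r M (h : Base M -> Base M) n x : iter M (S n) h x = iter M n h (h x).
Proof. induction n as [|n IH]; simpl; auto; simpl in IH; now rewrite IH. Qed.

Lemma iter_add M (h : Base M -> Base M) m n x : iter M (m + n) h x = iter M m h (iter M n h x).
Proof. induction m as [|m IH]; simpl; auto; now rewrite IH. Qed.

Section Dynamics.
Variable M : Metric_Space.
Local Notation X := (Base M).
Local Notation d := (dist M).
Variables f g : X -> X.
Hypothesis HC : compact_space M.
Hypothesis f_g : forall x, f (g x) = x.
Hypothesis HE : equicontinuous M f.

Lemma iter_cancel n x : iter M n f (iter M n g x) = x.
Proof.
  induction n as [|n IH]; auto.
  change (iter M (S n) f (g (iter M n g x)) = x); now rewrite iter_succ_r, f_g.
Qed.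

(* Two backward orbits have a common cluster point; pushing two close backward times [m <= n]
   forward by [f^n] with equicontinuity makes [f^(n-m)] nearly fix both points. *)
Lemma equicontinuous_recurrence a b N th : th > 0 ->
  exists n, (N <= n)%nat /\ d (iter M n f a) a <= th /\ d (iter M n f b) b <= th.
Proof.
  intros Hth; destruct (HE th Hth) as [et [Het Hequi]].
  destruct (compact_cluster_pair M HC (fun k => iter M k g a) (fun k => iter M k g b)) as [p [q Hpq]].
  destruct (Hpq (et / 2) ltac:(lra) 0%nat) as [m [_ [Ham Hbm]]].
  destruct (Hpq (et / 2) ltac:(lra) (m + N)%nat) as [n [Hn [Han Hbn]]].
  exists (n - m)%nat; split; [lia|].
  assert (Hreturn : forall z, d (iter M n g z) (iter M m g z) <= et -> d (iter M (n - m) f z) z <= th).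
  { intros z Hz; specialize (Hequi _ _ Hz n); rewrite iter_cancel in Hequi.
    replace n with ((n - m) + m)%nat in Hequi by lia.
    rewrite iter_add, iter_cancel in Hequi; now rewrite dist_sym. }
  split; apply Hreturn.
  - generalize (dist_triangle M (iter M n g a) p (iter M m g a)); rewrite (dist_sym M p); lra.
  - generalize (dist_triangle M (iter M n g b) q (iter M m g b)); rewrite (dist_sym M q); lra.
Qed.

Lemma dist_le_of_eventually_iter_le a b N gm :
  (forall n, (N <= n)%nat -> d (iter M n f a) (iter M n f b) <= gm) -> d a b <= gm.
Proof.
  intros Hfar; apply Rnot_lt_le; intros Hlt; set (th := (d a b - gm) / 4).
  destruct (equicontinuous_recurrence a b N th ltac:(unfold th; lra)) as [n [Hn [Ha Hb]]].
  generalize (Hfar n Hn) (dist_triangle M a (iter M n f a) b)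
    (dist_triangle M (iter M n f a) (iter M n f b) b).
  rewrite (dist_sym M a (iter M n f a)); unfold th in *; lra.
Qed.

Lemma iter_dist_reflect th : th > 0 ->
  exists et, et > 0 /\ forall a b t, d (iter M t f a) (iter M t f b) <= et -> d a b <= th.
Proof.
  intros Hth; destruct (HE th Hth) as [et [Het Hequi]]; exists et; split; auto.
  intros a b t Ht; apply (dist_le_of_eventually_iter_le a b t); intros n Hn.
  replace n with ((n - t) + t)%nat by lia; rewrite !iter_add; now apply Hequi.
Qed.


Lemma shadowing_chain_small : shadowing M f -> chain_small M.
Proof.
  intros Hsh gm Hgm; destruct (Hsh (gm / 2) ltac:(lra)) as [de [Hde Hshde]].
  destruct (HE de Hde) as [e [He Hequi]]; exists e; split; auto.
  intros a b (k & z & <- & <- & Hz).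
  destruct (Hshde (fun n => iter M n f (z (Nat.min n k)))) as [w Hw].
  - intros i; change (f (iter M i f ?x)) with (iter M (S i) f x).
    destruct (Nat.lt_ge_cases i k).
    + rewrite !Nat.min_l by lia; apply Hequi; left; now apply Hz.
    + rewrite !Nat.min_r by lia; rewrite dist_self; lra.
  - assert (Ha : d (z 0%nat) w <= gm / 2) by exact (Hw 0%nat).
    assert (Hb : d (z k) w <= gm / 2).
    { apply (dist_le_of_eventually_iter_le _ _ k); intros n Hn.
      specialize (Hw n); now rewrite Nat.min_r in Hw by lia. }
    generalize (dist_triangle M (z 0%nat) w (z k)); rewrite (dist_sym M w); lra.
Qed.

(* The initial point shadows: by induction on [i], [f^n (f^i x0)] and [f^n (x_i)] share a piece
   of the partition for every [n], since equicontinuity keeps [f^n] of a [de]-jump below a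
   Lebesgue number and sharing a piece is transitive for disjoint pieces. *)
Lemma dim_zero_shadowing : dim_zero M -> shadowing M f.
Proof.
  intros Hdim eps Heps.
  destruct (compact_ball_cover M HC (fun _ => eps / 2)) as [l Hl]; [intros; lra|].
  set (C := map (fun c y => d c y < eps / 2) l).
  destruct (Hdim C) as (V & HVopen & HVcov & HVref & HVdisj).
  - apply Forall_forall; intros U HU; apply in_map_iff in HU; destruct HU as [c [<- _]].
    apply is_open_ball.
  - intros x; destruct (Hl x) as [c [Hc Hx]]; exists (fun y => d c y < eps / 2); split; auto.
    now apply (in_map (fun c y => d c y < eps / 2)).
  - destruct (lebesgue_number M HC V HVopen HVcov) as [lam [Hlam Hleb]].
    destruct (HE lam Hlam) as [de [Hde Hequi]]; exists de; split; auto.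
    intros xs Hxs; exists (xs 0%nat).
    assert (Hpiece : forall i n, exists W, In W V /\
               W (iter M n f (iter M i f (xs 0%nat))) /\ W (iter M n f (xs i))).
    { induction i as [|i IH]; intros n.
      - destruct (HVcov (iter M n f (xs 0%nat))) as [W [HW Hx]]; now exists W.
      - apply (same_piece_trans M V _ (iter M n f (f (xs i))) _ HVdisj).
        + specialize (IH (S n)); now rewrite !iter_succ_r in IH.
        + destruct (Hleb (iter M n f (f (xs i)))) as [W [HW Hball]].
          exists W; split; auto; split; apply Hball; [rewrite dist_self; lra | now apply Hequi]. }
    intros i; destruct (Hpiece i 0%nat) as (W & HW & Horbit & Hxi).
    destruct (HVref W HW) as [U [HU HWU]]; apply in_map_iff in HU; destruct HU as [c [<- _]].
    generalize (HWU _ Horbit) (HWU _ Hxi) (dist_triangle M (xs i) c (iter M i f (xs 0%nat))).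
    simpl; rewrite (dist_sym M (xs i) c); lra.
Qed.

Lemma limit_pseudo_orbit_eventually_shadowed (xs : nat -> X) : shadowing M f ->
  Un_cv (fun i => d (f (xs i)) (xs (S i))) 0 ->
  forall eps, eps > 0 -> exists N y, forall i, (N <= i)%nat -> d (xs i) (iter M i f y) <= eps.
Proof.
  intros Hsh Hcv eps Heps; destruct (Hsh eps Heps) as [de [Hde Hshde]].
  destruct (Hcv de Hde) as [N HN].
  destruct (Hshde (fun j => xs (N + j)%nat)) as [w Hw].
  { intros j; rewrite Nat.add_succ_r; specialize (HN (N + j)%nat ltac:(lia)).
    rewrite R_dist_dist_0 in HN; lra. }
  exists N, (iter M N g w); intros i Hi.
  replace i with ((i - N) + N)%nat by lia; rewrite iter_add, iter_cancel.
  specialize (Hw (i - N)%nat); now replace (N + (i - N))%nat with ((i - N) + N)%nat in Hw by lia.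
Qed.

(* Points whose orbits eventually [1/(k+1)]-shadow the pseudo-orbit have orbits that stay
   uniformly close forever; a cluster point of them limit-shadows it. *)
Lemma shadowing_limit_shadowing : shadowing M f -> limit_shadowing M f.
Proof.
  intros Hsh xs Hcv.
  destruct (choice (fun k (Ny : nat * X) => forall i, (fst Ny <= i)%nat ->
              d (xs i) (iter M i f (snd Ny)) <= / INR (S k))) as [Ny HNy].
  { intros k; destruct (limit_pseudo_orbit_eventually_shadowed xs Hsh Hcv _ (inv_succ_pos k)) as [N [y Hy]].
    now exists (N, y). }
  set (y k := snd (Ny k)).
  assert (Hclose : forall k k' j,
             d (iter M j f (y k)) (iter M j f (y k')) <= / INR (S k) + / INR (S k')).
  { intros k k' j; apply (dist_le_of_eventually_iter_le _ _ (Nat.max (fst (Ny k)) (fst (Ny k')))).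
    intros n Hn; rewrite <- !iter_add.
    generalize (HNy k (n + j)%nat ltac:(lia)) (HNy k' (n + j)%nat ltac:(lia))
      (dist_triangle M (iter M (n + j) f (y k)) (xs (n + j)%nat) (iter M (n + j) f (y k'))).
    unfold y; rewrite (dist_sym M _ (xs (n + j)%nat)); lra. }
  destruct (compact_cluster_point M HC y (fun _ => True)) as [w Hw]; [eauto|].
  exists w; intros eps Heps.
  destruct (inv_succ_lt (eps / 4) ltac:(lra)) as [K HK].
  destruct (HE (/ INR (S K)) (inv_succ_pos K)) as [et [Het Hequi]].
  destruct (Hw et Het K) as [k [HKk [_ Hk]]].
  exists (fst (Ny K)); intros i Hi; rewrite R_dist_dist_0.
  generalize (HNy K i Hi) (Hclose K k i) (Hequi _ _ (Rlt_le _ _ Hk) i) (inv_succ_antimono K k HKk)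
    (dist_triangle M (xs i) (iter M i f (y K)) (iter M i f w))
    (dist_triangle M (iter M i f (y K)) (iter M i f (y k)) (iter M i f w)).
  unfold y; lra.
Qed.

(* Concatenate loops [a -> b -> a] of [et k]-chains, where [f^n] maps [et k]-jumps to
   [1/(k+1)]-jumps, so that [t |-> f^t (p t)] is a limit pseudo-orbit. *)
Lemma chained_pair_limit_pseudo_orbit a b : a <> b -> (forall e, e > 0 -> chained M e a b) ->
  exists p : nat -> X, Un_cv (fun t => d (f (iter M t f (p t))) (iter M (S t) f (p (S t)))) 0 /\
    (forall N, exists t, (N <= t)%nat /\ p t = a) /\ (forall N, exists t, (N <= t)%nat /\ p t = b).
Proof.
  intros Hab Hchain.
  destruct (choice (fun k et => et > 0 /\ forall x y, d x y <= et ->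
              forall n, d (iter M n f x) (iter M n f y) <= / INR (S k))) as [et Het].
  { intros k; apply HE, inv_succ_pos. }
  destruct (choice (fun k (Lcm : (nat * (nat -> X)) * nat) =>
              let '((L, c), m) := Lcm in
              c 0%nat = a /\ c L = a /\ c m = b /\ (m < L)%nat /\ chain_steps M (et k) L c))
    as [Lcm HLcm].
  { intros k; destruct (chained_loop M (et k) a b (Hchain _ (proj1 (Het k))) Hab) as (L & c & m & H).
    now exists ((L, c), m). }
  destruct (concat_paths X (fun k x y => d x y < et k) (fun k => fst (fst (Lcm k)))
              (fun k => snd (fst (Lcm k)))) as (p & level & Hstep & Hlevel & Hblocks).
  - intros k; specialize (HLcm k); destruct (Lcm k) as [[L c] m]; simpl; lia.
  - intros k; generalize (HLcm k) (HLcm (S k)).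
    destruct (Lcm k) as [[L c] m], (Lcm (S k)) as [[L' c'] m']; simpl.
    intros (_ & HcL & _) (Hc'0 & _); congruence.
  - intros k i Hi; specialize (HLcm k); destruct (Lcm k) as [[L c] m]; simpl in *; now apply HLcm.
  - exists p; split; [|split].
    + intros eps Heps; destruct (inv_succ_lt eps Heps) as [K HK], (Hlevel K) as [t0 Ht0].
      exists t0; intros t Ht; rewrite R_dist_dist_0.
      generalize (proj2 (Het (level t)) _ _ (Rlt_le _ _ (Hstep t)) (S t))
        (inv_succ_antimono K (level t) (Ht0 t Ht)); cbn [iter]; lra.
    + intros N; destruct (Hblocks N) as (k & t0 & HN & Hp); specialize (HLcm k); revert Hp HLcm.
      destruct (Lcm k) as [[L c] m]; simpl; intros Hp (Hc0 & _ & _ & Hm & _).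
      exists t0; split; auto; rewrite <- (Nat.add_0_r t0), Hp; [auto | lia].
    + intros N; destruct (Hblocks N) as (k & t0 & HN & Hp); specialize (HLcm k); revert Hp HLcm.
      destruct (Lcm k) as [[L c] m]; simpl; intros Hp (_ & _ & Hcm & Hm & _).
      exists (t0 + m)%nat; split; [lia | now rewrite Hp].
Qed.

Lemma limit_shadowing_chain_small : limit_shadowing M f -> chain_small M.
Proof.
  intros Hls; apply NNPP; intros Hnot.
  destruct (not_chain_small_pair M HC Hnot) as (a & b & Hab & Hchain).
  destruct (chained_pair_limit_pseudo_orbit a b Hab Hchain) as (p & Hcv & Ha & Hb).
  destruct (Hls (fun t => iter M t f (p t)) Hcv) as [w Hw].
  pose proof (dist_neq_pos M a b Hab) as Hpos.
  destruct (iter_dist_reflect (d a b / 3) ltac:(lra)) as [et [Het Hreflect]].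
  destruct (Hw et Het) as [N HN].
  assert (Hnear : forall t, (N <= t)%nat -> d (p t) w <= d a b / 3).
  { intros t Ht; apply (Hreflect _ _ t); specialize (HN t Ht); rewrite R_dist_dist_0 in HN; lra. }
  destruct (Ha N) as [t1 [Ht1 <-]], (Hb N) as [t2 [Ht2 Hpb]].
  generalize (Hnear t1 Ht1) (Hnear t2 Ht2) (dist_triangle M (p t1) w b).
  rewrite Hpb, (dist_sym M w b); lra.
Qed.

End Dynamics.

Theorem lemma3p1 (M : Metric_Space) (f : Base M -> Base M) :
  compact_space M -> homeomorphism M f -> equicontinuous M f ->
  (limit_shadowing M f <-> shadowing M f) /\
  (shadowing M f <-> dim_zero M) /\
  (dim_zero M <-> totally_disconnected M).
Proof.
  intros HC [_ [g [_ [_ f_g]]]] HE.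
  pose proof (chain_small_dim_zero M HC) as Hsmall_dim.
  split; [|split]; split; intros H.
  - apply (dim_zero_shadowing M f HC HE), Hsmall_dim, (limit_shadowing_chain_small M f g HC f_g HE H).
  - exact (shadowing_limit_shadowing M f g HC f_g HE H).
  - apply Hsmall_dim, (shadowing_chain_small M f g HC f_g HE H).
  - exact (dim_zero_shadowing M f HC HE H).
  - exact (dim_zero_totally_disconnected M H).
  - apply Hsmall_dim, (totally_disconnected_chain_small M HC H).
Qed.
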